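(* Let $u$ be a unit vector of the form $\frac{1}{\sqrt5^{\,\ell}}\begin{bmatrix}\alpha\\\beta\end{bmatrix}$ with $\ell\in\mathbb N$ and $\alpha,\beta\in\mathbb Z[i]$, whose least denominator exponent is $(0,\ell)$. Then there exists a Pauli+$V$ circuit $W$ of $V$-count $\ell$ such that $Wu=e_1=\begin{bmatrix}1\\0\end{bmatrix}$.
   Context: The Pauli gates are $X=\begin{bmatrix}0&1\\1&0\end{bmatrix}$, $Y=\begin{bmatrix}0&-i\\i&0\end{bmatrix}$, $Z=\begin{bmatrix}1&0\\0&-1\end{bmatrix}$; the $V$-gates are $V_X=\frac{1}{\sqrt5}\begin{bmatrix}1&2i\\2i&1\end{bmatrix}$, $V_Y=\frac{1}{\sqrt5}\begin{bmatrix}1&2\\-2&1\end{bmatrix}$, $V_Z=\frac{1}{\sqrt5}\begin{bmatrix}1+2i&0\\0&1-2i\end{bmatrix}$ and their inverses. A Pauli+$V$ circuit is a finite product of Pauli gates and $V$-gates; its $V$-count is the number of $V$-gates occurring in it. For a vector $v\in\mathbb C^2$ that can be written as $\frac{1}{\sqrt2^{\,k}\sqrt5^{\,\ell}}\begin{bmatrix}\alpha\\\beta\end{bmatrix}$ with $k,\ell\in\mathbb N$, $0\le k\le2$, $\alpha,\beta\in\mathbb Z[i]$, its least denominator exponent is the pair $(k_0,\ell_0)$ where $k_0$ (resp. $\ell_0$) is the least $k$ (resp. least $\ell$) for which such a representation exists. *)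

From mathcomp Require Import all_boot all_order all_algebra all_field.
Set Implicit Arguments. Unset Strict Implicit. Unset Printing Implicit Defensive.
Import Order.TTheory GRing.Theory Num.Theory.
Local Open Scope ring_scope.

Definition gaussian (z : algC) : Prop :=
  exists a b : int, z = a%:~R + b%:~R * 'i.

Definition cvec2 (x y : algC) : 'cV[algC]_2 :=
  \col_(i < 2) (if i == 0 :> nat then x else y).

Definition mx2 (a b c d : algC) : 'M[algC]_2 :=
  \matrix_(i < 2, j < 2)
    (if i == 0 :> nat then (if j == 0 :> nat then a else b)
     else (if j == 0 :> nat then c else d)).

Definition e1 : 'cV[algC]_2 := cvec2 1 0.

Definition sqrt5 : algC := sqrtC 5.
Definition sqrt2 : algC := sqrtC 2.

Definition PauliX : 'M[algC]_2 := mx2 0 1 1 0.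
Definition PauliY : 'M[algC]_2 := mx2 0 (- 'i) 'i 0.
Definition PauliZ : 'M[algC]_2 := mx2 1 0 0 (-1).
Definition VXm : 'M[algC]_2 := sqrt5^-1 *: mx2 1 (2 * 'i) (2 * 'i) 1.
Definition VYm : 'M[algC]_2 := sqrt5^-1 *: mx2 1 2 (-2) 1.
Definition VZm : 'M[algC]_2 := sqrt5^-1 *: mx2 (1 + 2 * 'i) 0 0 (1 - 2 * 'i).

Inductive gate : Type :=
  | GX | GY | GZ | GVX | GVY | GVZ | GVXinv | GVYinv | GVZinv.

Definition gate_mx (g : gate) : 'M[algC]_2 :=
  match g with
  | GX => PauliX | GY => PauliY | GZ => PauliZ
  | GVX => VXm | GVY => VYm | GVZ => VZm
  | GVXinv => invmx VXm | GVYinv => invmx VYm | GVZinv => invmx VZm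
  end.

Definition is_Vgate (g : gate) : bool :=
  match g with GX | GY | GZ => false | _ => true end.

(* A Pauli+V circuit is a finite sequence of gates; its matrix is the product
   (the list [g1; ...; gn] denotes g1 * ... * gn). *)
Definition circuit_mx (W : seq gate) : 'M[algC]_2 :=
  foldr (fun g M => gate_mx g *m M) 1%:M W.

Definition Vcount (W : seq gate) : nat := count is_Vgate W.

Definition representable (v : 'cV[algC]_2) (k l : nat) : Prop :=
  (k <= 2)%N /\
  exists alpha beta : algC, gaussian alpha /\ gaussian beta /\
    v = (sqrt2 ^+ k * sqrt5 ^+ l)^-1 *: cvec2 alpha beta.

Definition lde (v : 'cV[algC]_2) (k0 l0 : nat) : Prop :=
  (exists l, representable v k0 l) /\
  (forall k l, representable v k l -> (k0 <= k)%N) /\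
  (exists k, representable v k l0) /\
  (forall k l, representable v k l -> (l0 <= l)%N).

Definition unit_vector (v : 'cV[algC]_2) : Prop :=
  `|v 0 0| ^+ 2 + `|v 1 0| ^+ 2 = 1.

(* Write u = 5^-l (a + b i, c + d i), so that a^2 + b^2 + c^2 + d^2 = 5^l.
   Each of the six circuits V_X^{+-1}, V_Y^{+-1}, V_Z^{+-1} sends such a vector
   to 5^-(l+1/2) times an integer vector of norm 5^(l+1). A finite check in
   F_5^4 shows that whenever 5 divides the norm, either all four coordinates are
   divisible by 5 or the image under one of the six maps is; dividing by 5 then
   lowers the exponent by two, resp. one. In the first case the V-count is made
   up with the identity V_X V_X^-1, which is why the minimality of l is never
   used. At exponent 0 the vector is a unit multiple of a basis vector, which
   Pauli gates send to e1. *)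

From HB Require Import structures.
From mathcomp Require Import all_boot all_order all_algebra all_field.
From mathcomp Require Import zify ring.
Import GRing.Theory Num.Theory.
Local Open Scope ring_scope.
Set Implicit Arguments. Unset Strict Implicit. Unset Printing Implicit Defensive.

Record quad (R : Type) : Type := Quad { q1 : R; q2 : R; q3 : R; q4 : R }.

Definition qmap (R S : Type) (f : R -> S) (v : quad R) : quad S :=
  Quad (f (q1 v)) (f (q2 v)) (f (q3 v)) (f (q4 v)).

Definition qnorm (R : pzRingType) (v : quad R) : R :=
  q1 v ^+ 2 + q2 v ^+ 2 + q3 v ^+ 2 + q4 v ^+ 2.

Definition qscale (R : pzRingType) (k : R) (v : quad R) : quad R := qmap ( *%R k) v.

Definition qzero (R : pzRingType) (v : quad R) : bool :=
  [&& q1 v == 0, q2 v == 0, q3 v == 0 & q4 v == 0].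

Lemma qnorm_qscale (R : comPzRingType) (k : R) v : qnorm (qscale k v) = k ^+ 2 * qnorm v.
Proof. by case: v => a b c d; rewrite /qnorm /=; ring. Qed.

Lemma qnorm_qmap_intr (R : pzRingType) (v : quad int) :
  qnorm (qmap intr v) = (qnorm v)%:~R :> R.
Proof. by rewrite /qnorm /= !(intrD, rmorphXn). Qed.

Inductive Vstep := SX | SXinv | SY | SYinv | SZ | SZinv.

Scheme Equality for Vstep.
HB.instance Definition _ := comparableMixin Vstep_eq_dec.

Definition Vsteps : seq Vstep := [:: SX; SXinv; SY; SYinv; SZ; SZinv].

(* The coordinates of sqrt5 W [a + b i; c + d i] for the circuit W of the step. *)
Definition Vstep_image (R : pzRingType) (s : Vstep) (v : quad R) : quad R :=
  let: Quad a b c d := v in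
  match s with
  | SX => Quad (a - 2 * d) (b + 2 * c) (c - 2 * b) (d + 2 * a)
  | SXinv => Quad (a + 2 * d) (b - 2 * c) (c + 2 * b) (d - 2 * a)
  | SY => Quad (a + 2 * c) (b + 2 * d) (c - 2 * a) (d - 2 * b)
  | SYinv => Quad (a - 2 * c) (b - 2 * d) (c + 2 * a) (d + 2 * b)
  | SZ => Quad (a - 2 * b) (b + 2 * a) (c + 2 * d) (d - 2 * c)
  | SZinv => Quad (a + 2 * b) (b - 2 * a) (c - 2 * d) (d + 2 * c)
  end.

Lemma qnorm_Vstep_image (R : comPzRingType) s (v : quad R) :
  qnorm (Vstep_image s v) = 5 * qnorm v.
Proof. by case: v s => a b c d []; rewrite /qnorm /=; ring. Qed.

Lemma qmap_Vstep_image (R : comPzRingType) s (v : quad int) :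
  qmap intr (Vstep_image s v) = Vstep_image s (qmap intr v) :> quad R.
Proof. by case: v s => a b c d [] /=; rewrite /qmap /=; congr Quad; ring. Qed.

Lemma F5_reduction (v : quad 'F_5) :
  qnorm v = 0 -> qzero v \/ exists s, qzero (Vstep_image s v).
Proof.
have all_cases (a b c d : 'F_5) : let v := Quad a b c d in
  (qnorm v == 0) ==> qzero v || has (fun s => qzero (Vstep_image s v)) Vsteps.
  by move: a b c d; do 4 case=> [[|[|[|[|[|//]]]]] ?].
case: v => a b c d /eqP hv.
have /implyP/(_ hv)/orP[|/hasP[s _ hs]] := all_cases a b c d; first by left.
by right; exists s.
Qed.

Lemma dvdz5_F5 (n : int) : (5 %| n)%Z = (n%:~R == 0 :> 'F_5).
Proof. exact: (dvdz_pcharf (@pchar_Fp 5 isT)). Qed.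

Lemma qzero_F5_dvd (v : quad int) : qzero (qmap intr v : quad 'F_5) -> exists w, v = qscale 5 w.
Proof.
case: v => a b c d; rewrite /qzero /= -!dvdz5_F5.
case/and4P=> /dvdzP[a' ->] /dvdzP[b' ->] /dvdzP[c' ->] /dvdzP[d' ->].
by exists (Quad a' b' c' d'); rewrite /qscale /qmap /= ![_ * 5]mulrC.
Qed.

Lemma reduction_mod5 (v : quad int) : (5 %| qnorm v)%Z ->
  (exists w, v = qscale 5 w) \/ exists s w, Vstep_image s v = qscale 5 w.
Proof.
rewrite dvdz5_F5 -(qnorm_qmap_intr 'F_5) => /eqP /F5_reduction [/qzero_F5_dvd | [s]].
  by left.
by rewrite -qmap_Vstep_image => /qzero_F5_dvd; right; exists s.
Qed.

Lemma mul_mx2_cvec2 a b c d x y :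
  mx2 a b c d *m cvec2 x y = cvec2 (a * x + b * y) (c * x + d * y).
Proof.
apply/matrixP => i j; rewrite !mxE !big_ord_recr big_ord0 /= add0r !mxE /=.
by case: i => [[|[|//]]] ?.
Qed.

Lemma scale_cvec2 k x y : k *: cvec2 x y = cvec2 (k * x) (k * y).
Proof. by apply/matrixP => i j; rewrite !mxE; case: ifP. Qed.

Lemma circuit_mx_consE g W (v : 'cV[algC]_2) :
  circuit_mx (g :: W) *m v = gate_mx g *m (circuit_mx W *m v).
Proof. by rewrite /= mulmxA. Qed.

Lemma circuit_mx_cat W1 W2 : circuit_mx (W1 ++ W2) = circuit_mx W1 *m circuit_mx W2.
Proof. by elim: W1 => [|g W IH]; rewrite ?mul1mx //= IH mulmxA. Qed.

Lemma Vcount_cat W1 W2 : Vcount (W1 ++ W2) = (Vcount W1 + Vcount W2)%N.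
Proof. exact: count_cat. Qed.

Ltac eval_circuit :=
  rewrite ?circuit_mx_consE /= ?mul1mx /PauliX /PauliY /PauliZ /VXm /VYm /VZm;
  repeat progress rewrite ?mul_mx2_cvec2 ?scale_cvec2 -?scalemxAl ?scalemxAr;
  congr cvec2.

Lemma sqrt5_neq0 : sqrt5 != 0.
Proof. by rewrite sqrtC_eq0 pnatr_eq0. Qed.

Lemma sqrt5_sqr : sqrt5 ^+ 2 = 5.
Proof. exact: sqrtCK. Qed.

Definition gi (a b : int) : algC := a%:~R + b%:~R * 'i.

Definition gvec (v : quad int) : 'cV[algC]_2 := cvec2 (gi (q1 v) (q2 v)) (gi (q3 v) (q4 v)).

Lemma gvec_qscale (k : nat) v : gvec (qscale k%:R v) = k%:R *: gvec v.
Proof. by case: v => a b c d; rewrite /gvec scale_cvec2 /gi /=; congr cvec2; ring. Qed.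

(* V^-1 is realised as a Pauli conjugate of V, e.g. Z V_X Z = V_X^-1. *)
Definition Vstep_circuit (s : Vstep) : seq gate :=
  match s with
  | SX => [:: GVX] | SXinv => [:: GZ; GVX; GZ]
  | SY => [:: GVY] | SYinv => [:: GZ; GVY; GZ]
  | SZ => [:: GVZ] | SZinv => [:: GX; GVZ; GX]
  end.

Lemma Vcount_Vstep_circuit s : Vcount (Vstep_circuit s) = 1%N.
Proof. by case: s. Qed.

Lemma Vstep_circuitE s v :
  circuit_mx (Vstep_circuit s) *m gvec v = sqrt5^-1 *: gvec (Vstep_image s v).
Proof.
have i2 : ('i : algC) ^+ 2 = -1 := sqrCi _.
by case: v s => a b c d []; eval_circuit; rewrite /gi /=; ring: i2.
Qed.

Definition Vpad : seq gate := Vstep_circuit SX ++ Vstep_circuit SXinv.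

Lemma Vcount_Vpad : Vcount Vpad = 2%N.
Proof. by []. Qed.

Lemma circuit_Vpad x y : circuit_mx Vpad *m cvec2 x y = cvec2 x y.
Proof.
have i2 : ('i : algC) ^+ 2 = -1 := sqrCi _.
have s5 := sqrt5_sqr; have s5n0 := sqrt5_neq0.
by eval_circuit; field: i2 s5.
Qed.

Definition iphase (k : nat) : seq gate := flatten (nseq k [:: GX; GY; GZ]).

Lemma Vcount_iphase k : Vcount (iphase k) = 0%N.
Proof. by elim: k. Qed.

Lemma circuit_iphase k x y :
  circuit_mx (iphase k) *m cvec2 x y = cvec2 ('i ^+ k * x) ('i ^+ k * y).
Proof.
elim: k => [|k IH]; first by rewrite mul1mx !mul1r.
rewrite (_ : iphase k.+1 = [:: GX; GY; GZ] ++ iphase k) // circuit_mx_cat -mulmxA IH.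
by rewrite !exprS; eval_circuit; ring.
Qed.

Lemma circuit_X x y : circuit_mx [:: GX] *m cvec2 x y = cvec2 y x.
Proof. by eval_circuit; ring. Qed.

Lemma gi_unit (a b : int) : a ^+ 2 + b ^+ 2 = 1 -> exists k : nat, 'i ^+ k * gi a b = 1.
Proof.
have i2 : ('i : algC) ^+ 2 = -1 := sqrCi _.
move=> hab; have : a ^+ 2 = 0 /\ b ^+ 2 = 1 \/ a ^+ 2 = 1 /\ b ^+ 2 = 0.
  by move: (sqr_ge0 a) (sqr_ge0 b); lia.
rewrite /gi; case=> -[/eqP + /eqP]; rewrite sqrf_eq0 sqrf_eq1 ?sqrf_eq0 ?sqrf_eq1.
  by move=> /eqP-> /orP[]/eqP->; [exists 3%N | exists 1%N]; ring: i2.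
by move=> /orP[]/eqP-> /eqP->; [exists 0%N | exists 2%N]; ring: i2.
Qed.

Lemma gi_eq0 (a b : int) : a ^+ 2 + b ^+ 2 = 0 -> gi a b = 0.
Proof.
move=> /eqP; rewrite paddr_eq0 ?sqr_ge0 // !sqrf_eq0 => /andP[/eqP-> /eqP->].
by rewrite /gi mul0r addr0.
Qed.

Lemma Pauli_synthesis (v : quad int) : qnorm v = 1 ->
  exists W, Vcount W = 0%N /\ circuit_mx W *m gvec v = e1.
Proof.
case: v => a b c d; rewrite /qnorm /= => hv.
have : (a ^+ 2 + b ^+ 2 = 1 /\ c ^+ 2 + d ^+ 2 = 0) \/
       (a ^+ 2 + b ^+ 2 = 0 /\ c ^+ 2 + d ^+ 2 = 1).
  by move: (sqr_ge0 a) (sqr_ge0 b) (sqr_ge0 c) (sqr_ge0 d); lia.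
case=> -[hab hcd].
- have [k hk] := gi_unit hab.
  exists (iphase k); rewrite Vcount_iphase circuit_iphase hk gi_eq0 // mulr0.
  by split.
- have [k hk] := gi_unit hcd.
  exists (iphase k ++ [:: GX]); rewrite Vcount_cat Vcount_iphase circuit_mx_cat -mulmxA.
  by rewrite circuit_X circuit_iphase hk gi_eq0 // mulr0.
Qed.

Lemma V_synthesis (l : nat) (v : quad int) : qnorm v = 5 ^+ l ->
  exists W, Vcount W = l /\ circuit_mx W *m gvec v = sqrt5 ^+ l *: e1.
Proof.
elim/ltn_ind: l v => -[|l] IH v hv.
  by have [W [hW hWv]] := Pauli_synthesis hv; exists W; rewrite scale1r.
have hsqrt5 n : sqrt5 ^+ n.+2 = 5 * sqrt5 ^+ n by rewrite -addn2 exprD sqrt5_sqr mulrC.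
have hdvd : (5 %| qnorm v)%Z by rewrite hv exprS dvdz_mulr.
have [[w vE] | [s [w hs]]] := reduction_mod5 hdvd.
- case: l IH hv => [|l] IH hv.
    by move: hv; rewrite vE qnorm_qscale expr1; lia.
  have hw : qnorm w = 5 ^+ l.
    apply: (mulfI (_ : 5 ^+ 2 != 0)) => //.
    by rewrite -qnorm_qscale -vE hv -exprD addnC addn2.
  have [W [hW hWw]] := IH l (ltnW (ltnSn _)) w hw.
  exists (W ++ Vpad); rewrite Vcount_cat hW Vcount_Vpad addn2; split=> //.
  rewrite circuit_mx_cat -mulmxA vE gvec_qscale -scalemxAr circuit_Vpad.
  by rewrite -scalemxAr hWw scalerA hsqrt5.
- have hw : qnorm w = 5 ^+ l.
    apply: (mulfI (_ : 5 ^+ 2 != 0)) => //.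
    by rewrite -qnorm_qscale -hs qnorm_Vstep_image hv -exprS -exprD addnC addn2.
  have [W [hW hWw]] := IH l (ltnSn _) w hw.
  exists (W ++ Vstep_circuit s); rewrite Vcount_cat hW Vcount_Vstep_circuit addn1.
  split=> //; rewrite circuit_mx_cat -mulmxA Vstep_circuitE hs gvec_qscale.
  rewrite -!scalemxAr hWw !scalerA.
  by rewrite -sqrt5_sqr expr2 mulKf ?sqrt5_neq0 // exprS.
Qed.

Lemma sqr_norm_gi (a b : int) : `|gi a b| ^+ 2 = (a ^+ 2 + b ^+ 2)%:~R.
Proof.
have i2 : ('i : algC) ^+ 2 = -1 := sqrCi _.
by rewrite normCK /gi (mulrC b%:~R) conjC_rect ?realz //; ring: i2.
Qed.

Lemma unit_vector_gvec (l : nat) (v : quad int) :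
  unit_vector ((sqrt5 ^+ l)^-1 *: gvec v) -> qnorm v = 5 ^+ l.
Proof.
have h5 : (5 ^+ l : algC) != 0 by rewrite expf_neq0 // pnatr_eq0.
have norm_s5l : `|(sqrt5 ^+ l)^-1| ^+ 2 = (5 ^+ l)^-1.
  by rewrite normfV normrX ger0_norm ?sqrtC_ge0 // exprVn -exprM mulnC exprM sqrt5_sqr.
rewrite /unit_vector !mxE /= !normrM !exprMn norm_s5l -mulrDr !sqr_norm_gi -intrD.
move/(canRL (mulKf (invr_neq0 h5))); rewrite invrK mulr1.
have -> : (5 ^+ l : algC) = (5 ^+ l : int)%:~R by rewrite rmorphXn.
by move/intr_inj; rewrite /qnorm !addrA.
Qed.

Theorem lemma6p10 (l : nat) (alpha beta : algC) (u : 'cV[algC]_2) :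
  gaussian alpha -> gaussian beta ->
  u = (sqrt5 ^+ l)^-1 *: cvec2 alpha beta ->
  unit_vector u ->
  lde u 0 l ->
  exists W : seq gate, Vcount W = l /\ circuit_mx W *m u = e1.
Proof.
move=> [a [b ->]] [c [d ->]] -> /(@unit_vector_gvec l (Quad a b c d)) hnorm _.
have [W [hW hWv]] := V_synthesis hnorm.
exists W; split=> //.
by rewrite -scalemxAr [_ *m _]hWv scalerA mulVf ?scale1r // expf_neq0 ?sqrt5_neq0.
Qed.
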